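(* Fix a mass ratio $0<\mu<1$ and set $e=(1-\mu,0)$, $s=(-\mu,0)$. Let $$V(q)=-\frac{\mu}{|q-e|}-\frac{1-\mu}{|q-s|}-\frac12|q|^2,\qquad q\in\mathbb{R}^2\setminus\{e,s\},$$ and consider the planar circular restricted three-body problem, i.e. the Hamiltonian $H(q,p)=\tfrac12\big((p_1+q_2)^2+(p_2-q_1)^2\big)+V(q)$ on $T^*(\mathbb{R}^2\setminus\{e,s\})$ with the standard symplectic form, whose solutions in configuration space satisfy $$\ddot q_1=2\dot q_2-\frac{\partial V}{\partial q_1}(q),\qquad \ddot q_2=-2\dot q_1-\frac{\partial V}{\partial q_2}(q).$$ Let $\ell_2$ and $\ell_3$ be the collinear Lagrange points defined in the context, and let $c<\min\{V(\ell_2),V(\ell_3)\}$. Then every periodic solution $x\colon\mathbb{R}\to\mathbb{R}^2\setminus\{e,s\}$ of these equations with energy $c$ whose image lies in the bounded Hill's region $\mathfrak{K}_c^b$ has at least two distinct syzygies during each period: if $T>0$ is a period of $x$, there exist at least two distinct times $t\in[0,T)$ with $x_2(t)=0$.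
   Context: The function $u(x)=V(x,0)$ restricted to the $q_1$-axis is strictly concave on each of the intervals $(-\infty,-\mu)$, $(-\mu,1-\mu)$, $(1-\mu,\infty)$ and tends to $-\infty$ at their endpoints. Its unique maxima on these intervals are denoted $\ell_3\in(-\infty,-\mu)$, $\ell_1\in(-\mu,1-\mu)$ and $\ell_2\in(1-\mu,\infty)$ (viewed as points $(\ell_i,0)$ of the plane). These are critical points of $V$ with $V(\ell_1)<V(\ell_2)$ and $V(\ell_1)<V(\ell_3)$. The energy of a solution is the constant value of $H$ along it, where $p=(\dot q_1-q_2,\dot q_2+q_1)$. The Hill's region at energy $c$ is $\mathfrak{K}_c=\{q\in\mathbb{R}^2\setminus\{e,s\}: V(q)\le c\}$. For $c<\min\{V(\ell_2),V(\ell_3)\}$, $\mathfrak{K}_c$ splits into one unbounded connected component and a bounded part $\mathfrak{K}_c^b$, namely the union of the bounded connected components. If $V(\ell_1)\le c$, this bounded part is a single component containing $e$ and $s$ in its closure. If $c<V(\ell_1)$, it consists of two components, one around each of $e$ and $s$. A syzygy of $x$ is a time at which $x$ lies on the $q_1$-axis, i.e. $x_2(t)=0$. *)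

From Stdlib Require Import Reals.
From Coquelicot Require Import Coquelicot.
Open Scope R_scope.

Definition pt_e (mu : R) : R * R := (1 - mu, 0).
Definition pt_s (mu : R) : R * R := (- mu, 0).

Definition dist2 (q a : R * R) : R :=
  sqrt ((fst q - fst a) ^ 2 + (snd q - snd a) ^ 2).

Definition V (mu : R) (q : R * R) : R :=
  - mu / dist2 q (pt_e mu) - (1 - mu) / dist2 q (pt_s mu)
  - / 2 * (fst q ^ 2 + snd q ^ 2).

Definition dV1 (mu : R) (q : R * R) : R := Derive (fun y => V mu (y, snd q)) (fst q).
Definition dV2 (mu : R) (q : R * R) : R := Derive (fun y => V mu (fst q, y)) (snd q).

Definition H (mu : R) (q p : R * R) : R :=
  / 2 * ((fst p + snd q) ^ 2 + (snd p - fst q) ^ 2) + V mu q.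

Definition in_config (mu : R) (q : R * R) : Prop := q <> pt_e mu /\ q <> pt_s mu.

Definition is_solution (mu : R) (x : R -> R * R) : Prop :=
  forall t,
    in_config mu (x t) /\
    ex_derive (fun u => fst (x u)) t /\ ex_derive (fun u => snd (x u)) t /\
    is_derive (Derive (fun u => fst (x u))) t
      (2 * Derive (fun u => snd (x u)) t - dV1 mu (x t)) /\
    is_derive (Derive (fun u => snd (x u))) t
      (- 2 * Derive (fun u => fst (x u)) t - dV2 mu (x t)).

Definition momentum (x : R -> R * R) (t : R) : R * R :=
  (Derive (fun u => fst (x u)) t - snd (x t), Derive (fun u => snd (x u)) t + fst (x t)).

Definition has_energy (mu : R) (x : R -> R * R) (c : R) : Prop :=
  forall t, H mu (x t) (momentum x t) = c.

Definition Hill (mu c : R) (q : R * R) : Prop := in_config mu q /\ V mu q <= c.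

Definition connected_set (A : R * R -> Prop) : Prop :=
  forall U W : R * R -> Prop, open U -> open W ->
    (forall z, A z -> U z \/ W z) ->
    (exists z, A z /\ U z) -> (exists z, A z /\ W z) ->
    exists z, A z /\ U z /\ W z.

Definition component (A : R * R -> Prop) (q z : R * R) : Prop :=
  exists C : R * R -> Prop,
    (forall w, C w -> A w) /\ connected_set C /\ C q /\ C z.

Definition bounded_set (A : R * R -> Prop) : Prop :=
  exists M, forall z, A z -> fst z ^ 2 + snd z ^ 2 <= M.

Definition Hill_bounded (mu c : R) (q : R * R) : Prop :=
  Hill mu c q /\ bounded_set (component (Hill mu c) q).

Definition is_l2 (mu l : R) : Prop :=
  1 - mu < l /\ forall y, 1 - mu < y -> V mu (y, 0) <= V mu (l, 0).
Definition is_l3 (mu l : R) : Prop :=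
  l < - mu /\ forall y, y < - mu -> V mu (y, 0) <= V mu (l, 0).

(* Along a solution, [d/dt (x2' + 2 x1) = - dV/dq2 (x) = - x2 F(x)] with
   [F = mu / |q - e|^3 + (1 - mu) / |q - s|^3 - 1].  Off the q1-axis [F] is
   positive in a bounded component of the Hill region: if [F (a, y) <= 0] with
   [y <> 0], convexity of [r |-> 1 / r] as a function of [r^2] shows that [V]
   does not increase along the vertical ray [{(a, lam y) | lam >= 1}], which is
   then an unbounded connected subset of the Hill region through [(a, y)].
   Hence if [x2] keeps one sign over a period, [x2' + 2 x1] is monotone and
   periodic, so constant, and [x2] vanishes identically; otherwise [x2] changes
   sign, and so vanishes, twice per period. *)

From Stdlib Require Import Reals Lra Psatz Classical.
From Coquelicot Require Import Coquelicot.
Open Scope R_scope.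

Lemma dist2_sqr (q a : R * R) :
  dist2 q a ^ 2 = (fst q - fst a) ^ 2 + (snd q - snd a) ^ 2.
Proof.
  unfold dist2. apply pow2_sqrt.
  pose proof (pow2_ge_0 (fst q - fst a)). pose proof (pow2_ge_0 (snd q - snd a)). lra.
Qed.

Lemma sum_sqr_sub_pos (q a : R * R) :
  q <> a -> 0 < (fst q - fst a) ^ 2 + (snd q - snd a) ^ 2.
Proof.
  intros hqa. destruct q as [q1 q2], a as [a1 a2]; cbn [fst snd].
  pose proof (pow2_ge_0 (q1 - a1)). pose proof (pow2_ge_0 (q2 - a2)).
  destruct (Req_dec q1 a1) as [-> | h1].
  - destruct (Req_dec q2 a2) as [-> | h2]; [now elim hqa|].
    pose proof (Rsqr_pos_lt (q2 - a2) ltac:(lra)). unfold Rsqr in *. lra.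
  - pose proof (Rsqr_pos_lt (q1 - a1) ltac:(lra)). unfold Rsqr in *. lra.
Qed.

Lemma dist2_pos (q a : R * R) : q <> a -> 0 < dist2 q a.
Proof. intros hqa. apply sqrt_lt_R0, sum_sqr_sub_pos, hqa. Qed.

Lemma in_config_off_axis (mu : R) (q : R * R) : snd q <> 0 -> in_config mu q.
Proof. intros hq. split; intros ->; apply hq; reflexivity. Qed.

Definition dV2_factor (mu : R) (q : R * R) : R :=
  mu / dist2 q (pt_e mu) ^ 3 + (1 - mu) / dist2 q (pt_s mu) ^ 3 - 1.

Lemma is_derive_V_snd (mu a y : R) : in_config mu (a, y) ->
  is_derive (fun z => V mu (a, z)) y (y * dV2_factor mu (a, y)).
Proof.
  intros [He Hs].
  pose proof (sum_sqr_sub_pos _ _ He) as Pe. pose proof (sum_sqr_sub_pos _ _ Hs) as Ps.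
  unfold dV2_factor, V, dist2, pt_e, pt_s in *; cbn [fst snd] in *.
  rewrite Rminus_0_r in Pe, Ps.
  auto_derive;
    replace ((a - (1 - mu)) * ((a - (1 - mu)) * 1) + (y + - 0) * ((y + - 0) * 1))
      with ((a - (1 - mu)) ^ 2 + y ^ 2) by ring;
    replace ((a - - mu) * ((a - - mu) * 1) + (y + - 0) * ((y + - 0) * 1))
      with ((a - - mu) ^ 2 + y ^ 2) by ring.
  - repeat split; try lra; apply Rgt_not_eq, sqrt_lt_R0; lra.
  - pose proof (sqrt_lt_R0 _ Pe). pose proof (sqrt_lt_R0 _ Ps).
    rewrite !Rminus_0_r. field. lra.
Qed.

Lemma dV2_eq_factor (mu : R) (q : R * R) : in_config mu q ->
  dV2 mu q = snd q * dV2_factor mu q.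
Proof.
  destruct q as [a y]. intros hq.
  apply is_derive_unique. exact (is_derive_V_snd mu a y hq).
Qed.

(* [- m / s] lies below the tangent at [u = s0^2] of the concave map
   [u |-> - m / sqrt u]. *)
Lemma neg_div_le_tangent_sqr (m s s0 : R) : 0 <= m -> 0 < s -> 0 < s0 ->
  - m / s <= - m / s0 + m * (s ^ 2 - s0 ^ 2) / (2 * s0 ^ 3).
Proof.
  intros hm hs hs0.
  assert (E : - m / s0 + m * (s ^ 2 - s0 ^ 2) / (2 * s0 ^ 3) - - m / s
              = m * ((s - s0) ^ 2 * (s + 2 * s0)) / (2 * s * s0 ^ 3))
    by (field; lra).
  assert (0 <= m * ((s - s0) ^ 2 * (s + 2 * s0)) / (2 * s * s0 ^ 3)).
  { assert (0 < s0 ^ 3) by (apply pow_lt; lra).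
    apply Rdiv_le_0_compat; [|nra].
    apply Rmult_le_pos; [lra|]. apply Rmult_le_pos; [apply pow2_ge_0 | lra]. }
  lra.
Qed.

Lemma V_vertical_le_tangent (mu a y y' : R) :
  0 < mu < 1 -> in_config mu (a, y) -> in_config mu (a, y') ->
  V mu (a, y') <= V mu (a, y) + (y' ^ 2 - y ^ 2) / 2 * dV2_factor mu (a, y).
Proof.
  intros Hmu [He Hs] [He' Hs'].
  pose proof (dist2_pos _ _ He) as Pe. pose proof (dist2_pos _ _ Hs) as Ps.
  pose proof (dist2_pos _ _ He') as Pe'. pose proof (dist2_pos _ _ Hs') as Ps'.
  assert (De : dist2 (a, y') (pt_e mu) ^ 2 - dist2 (a, y) (pt_e mu) ^ 2 = y' ^ 2 - y ^ 2)
    by (rewrite !dist2_sqr; unfold pt_e, pt_s; cbn [fst snd]; ring).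
  assert (Ds : dist2 (a, y') (pt_s mu) ^ 2 - dist2 (a, y) (pt_s mu) ^ 2 = y' ^ 2 - y ^ 2)
    by (rewrite !dist2_sqr; unfold pt_e, pt_s; cbn [fst snd]; ring).
  pose proof (neg_div_le_tangent_sqr mu _ _ ltac:(lra) Pe' Pe) as Te.
  pose proof (neg_div_le_tangent_sqr (1 - mu) _ _ ltac:(lra) Ps' Ps) as Ts.
  rewrite De in Te. rewrite Ds in Ts.
  unfold V, dV2_factor in *. cbn [fst snd].
  set (re := dist2 (a, y) (pt_e mu)) in *. set (rs := dist2 (a, y) (pt_s mu)) in *.
  assert (E : - mu / re - (1 - mu) / rs - / 2 * (a ^ 2 + y ^ 2)
              + (y' ^ 2 - y ^ 2) / 2 * (mu / re ^ 3 + (1 - mu) / rs ^ 3 - 1)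
            = (- mu / re + mu * (y' ^ 2 - y ^ 2) / (2 * re ^ 3))
              + (- (1 - mu) / rs + (1 - mu) * (y' ^ 2 - y ^ 2) / (2 * rs ^ 3))
              - / 2 * (a ^ 2 + y' ^ 2))
    by (field; lra).
  rewrite E. lra.
Qed.

Lemma continuous_pair (f g : R -> R) (t : R) :
  continuous f t -> continuous g t -> continuous (fun s => (f s, g s)) t.
Proof.
  intros hf hg P [eps HP].
  assert (Hf : locally t (fun s => ball (f t) eps (f s)))
    by exact (hf _ (locally_ball _ _)).
  assert (Hg : locally t (fun s => ball (g t) eps (g s)))
    by exact (hg _ (locally_ball _ _)).
  apply (filter_imp _ _ (fun s h => HP (f s, g s) h)). exact (filter_and _ _ Hf Hg).
Qed.

Lemma lub_approx (E : R -> Prop) (m d : R) :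
  is_lub E m -> 0 < d -> exists s, E s /\ m - d < s.
Proof.
  intros [_ Hlub] hd. apply NNPP. intros hn.
  assert (m <= m - d); [|lra].
  apply Hlub. intros s Es. apply Rnot_lt_le. intros hs. apply hn. now exists s.
Qed.

Lemma segment_open_cover_meet (P Q : R -> Prop) (a b : R) :
  open P -> open Q -> a <= b -> P a -> Q b ->
  (forall s, a <= s <= b -> P s \/ Q s) -> exists s, a <= s <= b /\ P s /\ Q s.
Proof.
  intros oP oQ hab Pa Qb cov.
  set (E := fun s => a <= s <= b /\ P s).
  destruct (completeness E) as [m Hm].
  { exists b. intros s [hs _]. lra. }
  { exists a. split; [lra | exact Pa]. }
  assert (ham : a <= m) by (apply (proj1 Hm); split; [lra | exact Pa]).
  assert (hmb : m <= b) by (apply (proj2 Hm); intros s [hs _]; lra).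
  destruct (classic (P m)) as [Pm | nPm].
  - destruct (Req_dec m b) as [-> | hmb'].
    + exists b. repeat split; lra || assumption.
    + exfalso. destruct (oP m Pm) as [d Hd]. pose proof (cond_pos d).
      set (s := Rmin (m + d / 2) b).
      assert (m < s) by (apply Rmin_glb_lt; lra).
      assert (s <= m + d / 2) by apply Rmin_l. assert (s <= b) by apply Rmin_r.
      assert (Es : E s).
      { split; [lra|]. apply Hd. change (Rabs (s - m) < d). apply Rabs_def1; lra. }
      pose proof (proj1 Hm s Es). lra.
  - destruct (cov m (conj ham hmb)) as [Pm | Qm]; [contradiction|].
    destruct (oQ m Qm) as [d Hd].
    destruct (lub_approx E m d Hm (cond_pos d)) as [s [[hs Ps] hsd]].
    assert (s <= m) by (apply (proj1 Hm); split; assumption).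
    exists s. repeat split; try lra; try assumption.
    apply Hd. change (Rabs (s - m) < d). apply Rabs_def1; lra.
Qed.

Lemma connected_set_path_image (f : R -> R * R) (l : R) :
  (forall s, continuous f s) -> connected_set (fun z => exists s, l <= s /\ z = f s).
Proof.
  intros hf U W oU oW cov [_ [[s1 [h1 ->]] U1]] [_ [[s2 [h2 ->]] W2]].
  assert (oU' : open (fun s => U (f s)))
    by (apply open_comp; [intros s _; apply hf | exact oU]).
  assert (oW' : open (fun s => W (f s)))
    by (apply open_comp; [intros s _; apply hf | exact oW]).
  assert (cov' : forall s, l <= s -> U (f s) \/ W (f s))
    by (intros s hs; apply cov; now exists s).
  destruct (Rle_lt_dec s1 s2) as [h12 | h21].
  - destruct (segment_open_cover_meet _ _ s1 s2 oU' oW' h12 U1 W2) as [s [hs [Us Ws]]].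
    { intros s hs. apply cov'. lra. }
    exists (f s). split; [exists s; split; [lra | reflexivity] | now split].
  - destruct (segment_open_cover_meet _ _ s2 s1 oW' oU' (Rlt_le _ _ h21) W2 U1)
      as [s [hs [Ws Us]]].
    { intros s hs. destruct (cov' s); [lra | now right | now left]. }
    exists (f s). split; [exists s; split; [lra | reflexivity] | now split].
Qed.

Lemma dV2_factor_pos_of_Hill_bounded (mu c : R) (q : R * R) :
  0 < mu < 1 -> Hill_bounded mu c q -> snd q <> 0 -> 0 < dV2_factor mu q.
Proof.
  intros Hmu [[Hq HV] [M HM]] hy. destruct q as [a y]; cbn [snd] in hy.
  apply Rnot_le_lt. intros HF.
  assert (hy2 : 0 < y ^ 2) by (pose proof (Rsqr_pos_lt y hy); unfold Rsqr in *; lra).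
  assert (Hray : forall lam, 1 <= lam -> Hill mu c (a, lam * y)).
  { intros lam hl.
    assert (hly : lam * y <> 0) by (apply Rmult_integral_contrapositive; split; lra).
    split; [now apply in_config_off_axis|].
    pose proof (V_vertical_le_tangent mu a y (lam * y) Hmu Hq
                  (in_config_off_axis mu (a, lam * y) hly)) as HVle.
    assert (Hgrow : 0 <= ((lam * y) ^ 2 - y ^ 2) / 2).
    { replace (((lam * y) ^ 2 - y ^ 2) / 2) with ((lam ^ 2 - 1) * y ^ 2 / 2) by field.
      apply Rmult_le_pos; [|lra]. apply Rmult_le_pos; nra. }
    assert (HF' : 0 <= - dV2_factor mu (a, y)) by lra.
    pose proof (Rmult_le_pos _ _ Hgrow HF').
    lra. }
  assert (Hcomp : forall lam, 1 <= lam -> component (Hill mu c) (a, y) (a, lam * y)).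
  { intros lam hl. exists (fun z => exists s, 1 <= s /\ z = (a, s * y)).
    split; [|split; [|split]].
    - intros z [s [hs ->]]. now apply Hray.
    - apply connected_set_path_image. intros s.
      apply continuous_pair; [apply continuous_const|].
      apply (ex_derive_continuous (K := R_AbsRing) (V := R_NormedModule)).
      auto_derive. trivial.
    - exists 1. split; [lra|]. now rewrite Rmult_1_l.
    - now exists lam. }
  set (lam := 1 + Rabs M / y ^ 2).
  assert (hl : 1 <= lam).
  { pose proof (Rabs_pos M).
    assert (0 <= Rabs M / y ^ 2) by (apply Rdiv_le_0_compat; lra).
    unfold lam. lra. }
  pose proof (HM _ (Hcomp lam hl)) as Hb. cbn [fst snd] in Hb.
  assert (lam * y ^ 2 = y ^ 2 + Rabs M) by (unfold lam; field; lra).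
  pose proof (Rle_abs M). pose proof (pow2_ge_0 a).
  nra.
Qed.

Lemma is_derive_nonpos_decreasing (f df : R -> R) (a b : R) :
  (forall t, a <= t <= b -> is_derive f t (df t)) ->
  (forall t, a <= t <= b -> df t <= 0) ->
  forall s t, a <= s -> s <= t -> t <= b -> f t <= f s.
Proof.
  intros Hd Hneg s t has hst htb.
  destruct (MVT_gen f s t df) as [z [hz Hz]];
    rewrite ?Rmin_left, ?Rmax_right in * by lra.
  - intros z hz. apply Hd. lra.
  - intros z hz. apply continuity_pt_filterlim.
    apply (ex_derive_continuous (K := R_AbsRing) (V := R_NormedModule)).
    exists (df z). apply Hd. lra.
  - pose proof (Hneg z ltac:(lra)). nra.
Qed.

Lemma nonpos_derivative_vanishes_of_eq_ends (f df : R -> R) (a b : R) :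
  (forall t, a <= t <= b -> is_derive f t (df t)) ->
  (forall t, a <= t <= b -> df t <= 0) ->
  f b = f a -> forall t, a < t < b -> df t = 0.
Proof.
  intros Hd Hneg Hab t ht.
  assert (Hconst : forall u, a <= u <= b -> f a = f u).
  { intros u hu. apply Rle_antisym.
    - rewrite <- Hab. apply (is_derive_nonpos_decreasing f df a b Hd Hneg); lra.
    - apply (is_derive_nonpos_decreasing f df a b Hd Hneg); lra. }
  assert (H0 : is_derive f t 0).
  { apply (is_derive_ext_loc (fun _ => f a)).
    2: exact (is_derive_const (K := R_AbsRing) (V := R_NormedModule) (f a) t).
    assert (hd : 0 < Rmin (t - a) (b - t)) by (apply Rmin_glb_lt; lra).
    exists (mkposreal _ hd). intros u hu.
    change (Rabs (u - t) < Rmin (t - a) (b - t)) in hu.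
    pose proof (Rmin_l (t - a) (b - t)). pose proof (Rmin_r (t - a) (b - t)).
    apply Rabs_lt_between in hu. apply Hconst. lra. }
  rewrite <- (is_derive_unique _ _ _ H0). symmetry. apply is_derive_unique, Hd. lra.
Qed.

Lemma Derive_periodic (f : R -> R) (T t : R) :
  (forall u, f (u + T) = f u) -> Derive f (t + T) = Derive f t.
Proof.
  intros Hper. unfold Derive. f_equal. apply Lim_ext. intros h.
  rewrite <- (Hper t), <- (Hper (t + h)). do 3 f_equal. ring.
Qed.

Lemma continuity_sign_change_zero (h : R -> R) (a b : R) :
  continuity h -> a < b -> h a * h b < 0 -> exists z, a < z < b /\ h z = 0.
Proof.
  intros hc hab hs.
  destruct (IVT_cor h a b hc (Rlt_le _ _ hab) (Rlt_le _ _ hs)) as [z [hz hz0]].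
  assert (z <> a) by (intros ->; rewrite hz0 in hs; lra).
  assert (z <> b) by (intros ->; rewrite hz0 in hs; lra).
  exists z. split; [lra | exact hz0].
Qed.

Lemma periodic_two_zeros (h : R -> R) (T a b : R) :
  continuity h -> (forall t, h (t + T) = h t) ->
  0 <= a < T -> 0 <= b < T -> h a * h b < 0 ->
  exists t1 t2, 0 <= t1 < T /\ 0 <= t2 < T /\ t1 <> t2 /\ h t1 = 0 /\ h t2 = 0.
Proof.
  intros hc hp.
  assert (Hlt : forall a b, 0 <= a -> a < b -> b < T -> h a * h b < 0 ->
    exists t1 t2, 0 <= t1 < T /\ 0 <= t2 < T /\ t1 <> t2 /\ h t1 = 0 /\ h t2 = 0).
  { clear a b. intros a b ha hab hb hs.
    destruct (continuity_sign_change_zero h a b hc hab hs) as [z1 [hz1 e1]].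
    assert (hs' : h b * h (a + T) < 0) by (rewrite hp; lra).
    destruct (continuity_sign_change_zero h b (a + T) hc ltac:(lra) hs') as [z2 [hz2 e2]].
    destruct (Rlt_le_dec z2 T).
    - exists z1, z2. repeat split; lra || assumption.
    - exists z1, (z2 - T). repeat split; try lra.
      rewrite <- hp. now replace (z2 - T + T) with z2 by ring. }
  intros ha hb hs. destruct (Rtotal_order a b) as [hab | [-> | hba]].
  - apply (Hlt a b); lra.
  - nra.
  - apply (Hlt b a); lra.
Qed.

Definition drift2 (x : R -> R * R) (t : R) : R :=
  Derive (fun u => snd (x u)) t + 2 * fst (x t).

Lemma is_derive_drift2 (mu : R) (x : R -> R * R) (t : R) :
  is_solution mu x -> is_derive (drift2 x) t (- dV2 mu (x t)).
Proof.
  intros Hsol. destruct (Hsol t) as [_ [h1 [_ [_ h2]]]].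
  replace (- dV2 mu (x t))
    with ((- 2 * Derive (fun u => fst (x u)) t - dV2 mu (x t))
          + 2 * Derive (fun u => fst (x u)) t) by ring.
  apply (is_derive_plus (K := R_AbsRing) (V := R_NormedModule)); [exact h2|].
  apply is_derive_scal, Derive_correct, h1.
Qed.

Lemma drift2_periodic (x : R -> R * R) (T t : R) :
  (forall u, x (u + T) = x u) -> drift2 x (t + T) = drift2 x t.
Proof.
  intros Hper. unfold drift2.
  rewrite Hper, (Derive_periodic (fun u => snd (x u))); [reflexivity|].
  intros u. now rewrite Hper.
Qed.

Lemma snd_eq0_of_one_signed_period (mu c T sg : R) (x : R -> R * R) :
  0 < mu < 1 -> is_solution mu x -> (forall t, Hill_bounded mu c (x t)) ->
  0 < T -> (forall t, x (t + T) = x t) -> sg <> 0 ->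
  (forall t, 0 <= t < T -> 0 <= sg * snd (x t)) ->
  forall t, 0 < t < T -> snd (x t) = 0.
Proof.
  intros Hmu Hsol Hbd HT Hper Hsg Hsign.
  set (F := fun t => dV2_factor mu (x t)).
  assert (Hsign' : forall t, 0 <= t <= T -> 0 <= sg * snd (x t)).
  { intros t ht. destruct (Rle_lt_or_eq_dec t T (proj2 ht)) as [hlt | ->].
    - apply Hsign. lra.
    - rewrite <- (Rplus_0_l T), Hper. apply Hsign. lra. }
  assert (Hder : forall t,
    is_derive (fun u => sg * drift2 x u) t (- (sg * snd (x t)) * F t)).
  { intros t. replace (- (sg * snd (x t)) * F t) with (sg * - dV2 mu (x t)).
    - apply is_derive_scal, (is_derive_drift2 mu), Hsol.
    - unfold F. rewrite (dV2_eq_factor mu (x t) (proj1 (Hsol t))). ring. }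
  assert (Hneg : forall t, 0 <= t <= T -> - (sg * snd (x t)) * F t <= 0).
  { intros t ht. destruct (Req_dec (snd (x t)) 0) as [e | ne].
    - rewrite e. lra.
    - pose proof (dV2_factor_pos_of_Hill_bounded mu c (x t) Hmu (Hbd t) ne).
      pose proof (Hsign' t ht). unfold F. nra. }
  assert (Hloop : sg * drift2 x T = sg * drift2 x 0)
    by (rewrite <- (Rplus_0_l T), drift2_periodic by exact Hper; reflexivity).
  intros t ht.
  pose proof (nonpos_derivative_vanishes_of_eq_ends _ _ 0 T
                (fun u _ => Hder u) Hneg Hloop t ht) as Hzero.
  destruct (Req_dec (snd (x t)) 0) as [e | ne]; [exact e | exfalso].
  pose proof (dV2_factor_pos_of_Hill_bounded mu c (x t) Hmu (Hbd t) ne).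
  assert (sg * snd (x t) <> 0)
    by (apply Rmult_integral_contrapositive; split; assumption).
  apply (Rmult_integral_contrapositive (- (sg * snd (x t))) (F t)); [|exact Hzero].
  split; [lra | unfold F; lra].
Qed.

Theorem theorem1p1 (mu l2 l3 c : R) (x : R -> R * R) (T : R) :
  0 < mu < 1 ->
  is_l2 mu l2 -> is_l3 mu l3 ->
  c < Rmin (V mu (l2, 0)) (V mu (l3, 0)) ->
  is_solution mu x ->
  has_energy mu x c ->
  (forall t, Hill_bounded mu c (x t)) ->
  0 < T -> (forall t, x (t + T) = x t) ->
  exists t1 t2, 0 <= t1 < T /\ 0 <= t2 < T /\ t1 <> t2 /\
    snd (x t1) = 0 /\ snd (x t2) = 0.
Proof.
  intros Hmu _ _ _ Hsol _ Hbd HT Hper.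
  set (x2 := fun t => snd (x t)).
  destruct (classic (exists a b, 0 <= a < T /\ 0 <= b < T /\ x2 a * x2 b < 0))
    as [[a [b [ha [hb hab]]]] | Hsign].
  - apply (periodic_two_zeros x2 T a b); try assumption.
    + intros t. apply continuity_pt_filterlim.
      apply (ex_derive_continuous (K := R_AbsRing) (V := R_NormedModule)), (Hsol t).
    + intros t. unfold x2. now rewrite Hper.
  - assert (Hzero : forall t, 0 < t < T -> x2 t = 0).
    { destruct (classic (exists a, 0 <= a < T /\ x2 a <> 0)) as [[a [ha hna]] | Hnone].
      - apply (snd_eq0_of_one_signed_period mu c T (x2 a) x Hmu Hsol Hbd HT Hper hna).
        intros t ht. apply Rnot_lt_le. intros hneg. apply Hsign. now exists a, t.
      - intros t ht. apply NNPP. intros hne. apply Hnone.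
        exists t. split; [lra | exact hne]. }
    exists (T / 3), (2 * T / 3). repeat split; try lra; apply Hzero; lra.
Qed.
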